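(* Let $T$ be the semi-infinite matrix $T_{jk}=\binom{j+k}{j}$, $j,k\in\mathbb N$. Let $J$ and $\widetilde J$ be the semi-infinite symmetric tridiagonal matrices with diagonal entries $J_{nn}=b_n$, $\widetilde J_{nn}=\beta_n$ and off-diagonal entries $J_{n-1,n}=J_{n,n-1}=a_n$, $\widetilde J_{n-1,n}=\widetilde J_{n,n-1}=\alpha_n$ ($n\ge1$), all other entries zero, where $$a_n=n,\quad b_n=-n,\quad \alpha_n=n^3,\quad \beta_n=-2n^3-3n^2-2n.$$ Then $TJ=JT$ and $T\widetilde J=\widetilde JT$.
   Context: Matrix indices start at $0$; products of a semi-infinite band matrix with $T$ are finite sums entrywise. *)

From mathcomp Require Import all_boot all_order all_algebra.
Set Implicit Arguments. Unset Strict Implicit. Unset Printing Implicit Defensive.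
Import Order.TTheory GRing.Theory Num.Theory.
Local Open Scope ring_scope.

Definition imat := nat -> nat -> int.

Definition Tmat : imat := fun j k => ('C(j + k, j))%:Z.

Definition tridiag (a b : nat -> int) : imat := fun i j =>
  if i == j then b i
  else if i.+1 == j then a j
  else if j.+1 == i then a i
  else 0.

(* Products of a semi-infinite matrix with a matrix whose column k
   (resp. row j) is supported in indices < k+2 (resp. < j+2),
   e.g. a tridiagonal one: the entrywise sum is finite and is
   computed exactly by truncating at the support. *)
Definition mul_band_r (A B : imat) : imat := fun j k =>
  \sum_(i < k.+2) A j i * B i k.
Definition mul_band_l (B A : imat) : imat := fun j k =>
  \sum_(i < j.+2) B j i * A i k.

Definition a_ (n : nat) : int := n%:Z.
Definition b_ (n : nat) : int := - n%:Z.
Definition alpha_ (n : nat) : int := (n%:Z) ^+ 3.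
Definition beta_ (n : nat) : int :=
  - 2 * (n%:Z) ^+ 3 - 3 * (n%:Z) ^+ 2 - 2 * n%:Z.

Definition Jmat : imat := tridiag a_ b_.
Definition Jtmat : imat := tridiag alpha_ beta_.

(** Entrywise, both sides of each identity are three-term combinations of
    [T_{j,k}] and its neighbours [T_{j,k±1}], [T_{j±1,k}].  Writing
    [T_{jk} = (j+k)! / (j! k!)] over the rationals, every neighbour is
    [T_{jk}] times a simple ratio such as [(j+k+1)/(k+1)], so once the
    boundary cases [j = 0], [k = 0] are separated each identity is a
    rational-function identity in [j] and [k]. *)
From mathcomp Require Import all_boot all_order all_algebra.
From mathcomp Require Import zify ring.
Import Order.TTheory GRing.Theory Num.Theory.
Local Open Scope ring_scope.

Lemma tridiag_diag (a b : nat -> int) i : tridiag a b i i = b i.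
Proof. by rewrite /tridiag eqxx. Qed.

Lemma tridiag_super (a b : nat -> int) i : tridiag a b i i.+1 = a i.+1.
Proof. by rewrite /tridiag eqxx; case: eqP => //; lia. Qed.

Lemma tridiag_sub (a b : nat -> int) i : tridiag a b i.+1 i = a i.+1.
Proof. by rewrite /tridiag eqxx; do 2 (case: eqP => [?|_]; first lia). Qed.

Lemma tridiag_out (a b : nat -> int) i j :
  (i.+1 < j)%N || (j.+1 < i)%N -> tridiag a b i j = 0.
Proof.
by move=> far; rewrite /tridiag; do 3 (case: eqP => [?|_]; first lia).
Qed.

(* At the boundary the terms [A j k.-1] and [A j.-1 k] below are junk
   ([0.-1 = 0]); they are cancelled by [a 0 = 0]. *)
Lemma mul_band_r_tridiag (a b : nat -> int) (A : imat) j k : a 0%N = 0 ->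
  mul_band_r A (tridiag a b) j k =
  A j k.-1 * a k + A j k * b k + A j k.+1 * a k.+1.
Proof.
move=> a0; rewrite /mul_band_r !big_ord_recr /= tridiag_sub tridiag_diag.
case: k => [|k]; first by rewrite big_ord0 a0 !mulr0 !add0r.
rewrite big_ord_recr /= big1 ?add0r => [|[i lti] _]; last first.
  by rewrite tridiag_out ?mulr0 //=; lia.
by rewrite tridiag_super.
Qed.

Lemma mul_band_l_tridiag (a b : nat -> int) (A : imat) j k : a 0%N = 0 ->
  mul_band_l (tridiag a b) A j k =
  a j * A j.-1 k + b j * A j k + a j.+1 * A j.+1 k.
Proof.
move=> a0; rewrite /mul_band_l !big_ord_recr /= tridiag_super tridiag_diag.
case: j => [|j]; first by rewrite big_ord0 a0 !mul0r !add0r.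
rewrite big_ord_recr /= big1 ?add0r => [|[i lti] _]; last first.
  by rewrite tridiag_out ?mul0r //=; lia.
by rewrite tridiag_sub.
Qed.

Lemma Tmat_ratE j k :
  ((Tmat j k)%:~R : rat) = (j + k)`!%:R / (j`!%:R * k`!%:R).
Proof.
have := bin_fact (leq_addr k j); rewrite addKn => <-.
by rewrite /Tmat !natrM mulfK // mulf_neq0 // pnatr_eq0 -lt0n fact_gt0.
Qed.

Lemma fact_rat_neq0 n : (n`!%:R : rat) != 0.
Proof. by rewrite pnatr_eq0 -lt0n fact_gt0. Qed.

Lemma natS_rat_neq0 n : (1 + n%:R : rat) != 0.
Proof. by rewrite -[1]/(1%:R) -natrD pnatr_eq0. Qed.

Lemma natSS_rat_neq0 n : (2 + n%:R : rat) != 0.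
Proof. by rewrite -natrD pnatr_eq0. Qed.

Lemma Tmat_Jmat_commute j k :
  mul_band_r Tmat Jmat j k = mul_band_l Jmat Tmat j k.
Proof.
rewrite mul_band_r_tridiag // mul_band_l_tridiag //.
apply: (@intr_inj rat); rewrite !(intrD, intrM) !Tmat_ratE /a_ /b_ !intrN.
case: k => [|k]; case: j => [|j] //=.
all: rewrite ?(add0n, addn0, addSn, addnS, factS, natrM, fact0, mul1r, mulr1).
all: by field; rewrite ?fact_rat_neq0 ?natS_rat_neq0 ?natSS_rat_neq0.
Qed.

Lemma Tmat_Jtmat_commute j k :
  mul_band_r Tmat Jtmat j k = mul_band_l Jtmat Tmat j k.
Proof.
rewrite mul_band_r_tridiag // mul_band_l_tridiag //.
apply: (@intr_inj rat).
rewrite !(intrD, intrM, intrN, intrB, rmorphXn) !Tmat_ratE /alpha_ /beta_.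
case: k => [|k]; case: j => [|j] //=.
all: rewrite ?(add0n, addn0, addSn, addnS, factS, natrM, fact0, mul1r, mulr1).
all: by field; rewrite ?fact_rat_neq0 ?natS_rat_neq0 ?natSS_rat_neq0.
Qed.

Theorem theorem3p1 :
  (forall j k : nat, mul_band_r Tmat Jmat j k = mul_band_l Jmat Tmat j k) /\
  (forall j k : nat, mul_band_r Tmat Jtmat j k = mul_band_l Jtmat Tmat j k).
Proof. split; [exact: Tmat_Jmat_commute | exact: Tmat_Jtmat_commute]. Qed.
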